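(* Let $L/K$ be a nontrivial finite extension inside $\bar K$, $G={\rm Gal}(\tilde L/K)$, $H={\rm Gal}(\tilde L/L)$, and $H^G$ the normal closure of $H$ in $G$. (1) $F=\tilde L^{H^G}$ is the unique intermediate field $K\subseteq F\subseteq L$ such that $F/K$ is Galois of maximum possible degree (among subfields of $L$ Galois over $K$). (2) Define the ascending index $t_K(L)=[F:K]$ and $u_K(L)=[L:F]$. Then $t_K(L)\,u_K(L)=[L:K]$, $t_K(L)=[G:H^G]$, $u_K(L)=[H^G:H]$, and $r_K(L)\mid t_K(L)\,r_F(L)$. (3) There is a unique strictly ascending chain of fields $K=F_0\subsetneq F_1\subsetneq\cdots\subsetneq F_k$ inside $L$ such that for all $i\ge1$, $F_i/F_{i-1}$ is Galois of maximum possible degree among subfields of $L$ Galois over $F_{i-1}$, the chain terminating at $F_k$ with $t_{F_k}(L)=1$. It corresponds (via $F_i=\tilde L^{G_i}$) to the unique strictly descending chain of subgroups $G=G_0\supsetneq G_1\supsetneq\cdots\supsetneq G_k$ with $G_i=H^{G_{i-1}}$ (the normal closure of $H$ in $G_{i-1}$) and $H^{G_k}=G_k$; moreover $t_{F_i}(L)=[G_i:G_{i+1}]$ and $u_{F_i}(L)=[G_{i+1}:H]$. (4) $F_k=L$ iff $L/F_{k-1}$ is Galois. (5) $t_K(L)=1$ iff $H^G=G$ iff the chain in (3) is the singleton $K$. (6) $L/K$ is Galois iff $H^G=1$ iff $H^G=H$ iff the chain in (3) is $K\subsetneq L$. (7) $H$ is a proper normal subgroup of $H^G$ iff ($H^G\ne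 G$, $H^G\neq H$ and $H\trianglelefteq H^G$) iff the chain in (3) is $K\subsetneq F\subsetneq L$.
   Context: $K$ is a perfect field with a fixed algebraic closure $\bar K$; all extensions are finite and contained in $\bar K$. For a finite extension $L/K$, $\tilde L$ denotes its Galois closure in $\bar K$. Writing $L=K(\alpha)$ with $f$ the minimal polynomial of $\alpha$ over $K$, the cluster size $r_K(L)$ is the number of roots of $f$ lying in $L$ (independent of $\alpha$; it equals $|{\rm Aut}(L/K)|$); for an intermediate field $E$, $r_E(L)$ and $t_E(L)$ are defined in the same way with base field $E$. For a subgroup $H$ of a group $G$, $H^G$ is the intersection of all normal subgroups of $G$ containing $H$. *)

From HB Require Import structures.
From mathcomp Require Import all_boot all_order all_algebra all_fingroup all_solvable all_field.
Set Implicit Arguments. Unset Strict Implicit. Unset Printing Implicit Defensive.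
Import GRing.Theory.
Local Open Scope ring_scope.

Definition ncl (gT : finGroupType) (H G : {set gT}) : {set gT} :=
  (\bigcap_(N : {group gT} | (H \subset N) && (N <| G)) N)%g.

Section FieldDefs.
Variables (F0 : fieldType) (Om : splittingFieldType F0).

Definition is_gal_closure (K L M : {subfield Om}) : Prop :=
  [/\ (L <= M)%VS, galois K M &
      forall M' : {subfield Om}, (L <= M')%VS -> galois K M' -> (M <= M')%VS].

Definition maxgal (E L F : {subfield Om}) : Prop :=
  [/\ (E <= F)%VS, (F <= L)%VS, galois E F &
      forall F' : {subfield Om}, (E <= F')%VS -> (F' <= L)%VS -> galois E F' ->
        (\dim_E F' <= \dim_E F)%N].

Definition tdeg (E L : {subfield Om}) (n : nat) : Prop :=
  exists F : {subfield Om}, maxgal E L F /\ \dim_E F = n.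
Definition udeg (E L : {subfield Om}) (n : nat) : Prop :=
  exists F : {subfield Om}, maxgal E L F /\ \dim_F L = n.

Definition cluster (E L : {subfield Om}) (n : nat) : Prop :=
  exists a : Om, (<<E; a>>%VS = L :> {vspace Om}) /\
    exists s : seq Om, [/\ uniq s,
      forall x, (x \in s) = (x \in L) && root (minPoly E a) x & size s = n].

Definition asc_chain (K L : {subfield Om}) (s : seq {subfield Om}) : Prop :=
  exists k : nat, [/\ size s = k.+1, nth K s 0 = K,
    forall i, (i < k)%N ->
      nth K s i != nth K s i.+1 /\ maxgal (nth K s i) L (nth K s i.+1)
    & tdeg (nth K s k) L 1].
End FieldDefs.

Definition desc_chain (gT : finGroupType) (H G : {set gT}) (gs : seq {set gT}) : Prop :=
  exists k : nat, [/\ size gs = k.+1, nth G gs 0 = G,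
    forall i, (i < k)%N ->
      nth G gs i.+1 = ncl H (nth G gs i) /\ (nth G gs i.+1 \proper nth G gs i)%g
    & ncl H (nth G gs k) = nth G gs k].

From HB Require Import structures.
From mathcomp Require Import all_boot all_order all_algebra all_fingroup all_solvable all_field.
Set Implicit Arguments. Unset Strict Implicit. Unset Printing Implicit Defensive.

(* Let M be the Galois closure, G = Gal(M/K) and H = Gal(M/L).  By the Galois
   correspondence, a field E <= F <= L is Galois over E exactly when Gal(M/F)
   is normal in Gal(M/E); as Gal(M/F) contains H, the largest such F is the
   fixed field of the normal closure of H in Gal(M/E).  Iterating, the
   ascending chain of fields is the image under fixedField of the descending
   chain G, H^G, H^(H^G), ..., which decreases strictly until it stabilises.
   For a primitive element a of L over E, the E-conjugates of a lying in L
   are the g a with g in Gal(M/E) normalising H, and g a only depends on the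
   coset H g; hence r_E(L) = [N_Gal(M/E)(H) : H], and the divisibility in (2) is an
   index computation. *)

Lemma eq_size_undup_map (T U V : eqType) (f : T -> U) (g : T -> V) (s : seq T) :
  {in s &, forall x y, (f x == f y) = (g x == g y)} ->
  size (undup (map f s)) = size (undup (map g s)).
Proof.
elim: s => //= x s IHs eq_fg.
have mem_fg : (f x \in map f s) = (g x \in map g s).
  apply/mapP/mapP => -[y sy /eqP]; [rewrite eq_fg | rewrite -eq_fg];
    by rewrite ?inE ?eqxx ?sy ?orbT // => /eqP; exists y.
rewrite mem_fg; case: ifP => _ /=; rewrite IHs // => y z sy sz;
  by rewrite eq_fg // inE ?sy ?sz orbT.
Qed.

Section NormalClosure.
Variable gT : finGroupType.
Implicit Types (A C : {set gT}) (H B X N : {group gT}).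
Local Open Scope group_scope.

Lemma ncl_group_set A C : group_set (ncl A C).
Proof. exact: group_set_bigcap. Qed.
Canonical ncl_group A C := group (ncl_group_set A C).

Lemma ncl_min H X N : H \subset N -> N <| X -> ncl H X \subset N.
Proof. by move=> sHN nsNX; rewrite /ncl (bigcap_inf N) // sHN nsNX. Qed.

Lemma sub_ncl H X : H \subset ncl H X.
Proof. by apply/bigcapsP => N /andP[]. Qed.

Lemma ncl_sub H X : H \subset X -> ncl H X \subset X.
Proof. by move=> sHX; rewrite ncl_min ?normal_refl. Qed.

Lemma ncl_normal H X : H \subset X -> ncl H X <| X.
Proof.
move=> sHX; rewrite /normal ncl_sub //; apply: norms_bigcap.
by apply/bigcapsP => N /andP[_ /normal_norm].
Qed.

Lemma ncl_id H X : H <| X -> ncl H X = H.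
Proof. by move=> nsHX; apply/eqP; rewrite eqEsubset ncl_min ?sub_ncl. Qed.

Lemma ncl_idP H X : H \subset X -> reflect (ncl H X = H) (H <| X).
Proof. by move=> sHX; apply: (iffP idP) => [/ncl_id | <-] //; apply: ncl_normal. Qed.

Lemma proper_normal_ncl H X : H \subset X ->
  (H \proper ncl H X) && (H <| ncl H X) = [&& ncl H X != X, ncl H X != H & H <| ncl H X].
Proof.
move=> sHX; rewrite properEneq sub_ncl andbT eq_sym.
case nsH: (H <| ncl H X); rewrite ?andbF // !andbT.
have [eqNX | //] := eqVneq (ncl H X) X.
have nsHX : H <| X by rewrite -eqNX.
by rewrite (ncl_id nsHX) eqxx.
Qed.

Lemma index_norm_dvdn H B X : H \subset B -> B <| X ->
  #|'N_X(H) : H| %| #|X : B| * #|'N_B(H) : H|.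
Proof.
move=> sHB nsBX; have sBX := normal_sub nsBX.
have sHNB : H \subset 'N_B(H) by rewrite subsetI sHB normG.
have sNBNX : 'N_B(H) \subset 'N_X(H) by rewrite setSI.
rewrite -(Lagrange_index sNBNX sHNB) dvdn_mul //.
have NXB : 'N_X(H) :&: B = 'N_B(H) by rewrite setIAC (setIidPr sBX) setIC.
rewrite -[in #|_ : 'N_B(H)|]NXB indexgI -indexMg -norm_joinEr; last first.
  by rewrite (subset_trans _ (normal_norm nsBX)) ?subsetIl.
by rewrite indexSg ?joing_subl // join_subG sBX subsetIl.
Qed.

End NormalClosure.

Section NormalClosureChain.
Variables (gT : finGroupType) (H G : {group gT}).
Local Open Scope group_scope.

Fixpoint ncl_iter n : {group gT} := if n is n'.+1 then ncl_group H (ncl_iter n') else G.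

Definition ncl_stable n := ncl_iter n.+1 == ncl_iter n :> {set gT}.

Lemma ncl_iter_card n : (forall i, 0 < i <= n -> ~~ ncl_stable i) ->
  #|ncl_iter n.+1| + n <= #|gT|.
Proof.
elim: n => [_|n IHn unst]; first by rewrite addn0 max_card.
(* Past index 0 every iterate contains H, so each unstable step shrinks it. *)
have unst' i : 0 < i <= n -> ~~ ncl_stable i.
  by case/andP=> i_gt0 le_in; rewrite unst // i_gt0 (leq_trans le_in).
apply: leq_trans (IHn unst'); rewrite addnS ltn_add2r; apply: proper_card.
by rewrite properEneq (ncl_sub (sub_ncl _ _)) andbT -val_eqE unst ?leqnn.
Qed.

Lemma ncl_stable_exists : exists n, ncl_stable n.
Proof.
have [/existsP[i st_i] | /existsPn unst] := boolP [exists i : 'I_#|gT|.+1, ncl_stable i].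
  by exists i.
have /(@ncl_iter_card #|gT|) : forall i, 0 < i <= #|gT| -> ~~ ncl_stable i.
  by move=> i /andP[_ le_iT]; exact: (unst (@Ordinal #|gT|.+1 i le_iT)).
rewrite -[X in _ <= X]add0n leq_add2r leqn0 => /eqP card0.
by have := cardG_gt0 (ncl_iter #|gT|.+1); rewrite card0.
Qed.

Definition ncl_len := ex_minn ncl_stable_exists.

Lemma ncl_len_stable : ncl_stable ncl_len.
Proof. by rewrite /ncl_len; case: ex_minnP. Qed.

Lemma ncl_len_min i : i < ncl_len -> ~~ ncl_stable i.
Proof.
rewrite /ncl_len; case: ex_minnP => m _ min_m lt_im; apply/negP => /min_m.
by rewrite leqNgt lt_im.
Qed.

Lemma ncl_lenE n : (forall i, i < n -> ~~ ncl_stable i) -> ncl_stable n -> ncl_len = n.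
Proof.
move=> unst st_n; apply/eqP; rewrite eqn_leq.
apply/andP; split; rewrite leqNgt; apply/negP; first by move/ncl_len_min; rewrite st_n.
by move/unst; rewrite ncl_len_stable.
Qed.

Lemma ncl_stable_eqH n : ncl_iter n :=: H -> ncl_stable n.
Proof. by rewrite /ncl_stable /= => ->; rewrite ncl_id ?normal_refl. Qed.

Definition ncl_chain : seq {set gT} := mkseq (fun i => gval (ncl_iter i)) ncl_len.+1.

Lemma size_ncl_chain : size ncl_chain = ncl_len.+1.
Proof. exact: size_mkseq. Qed.

Lemma nth_ncl_chain A i : i < ncl_len.+1 -> nth A ncl_chain i = ncl_iter i.
Proof. exact: nth_mkseq. Qed.

Hypothesis sHG : H \subset G.

Lemma sub_ncl_iter n : H \subset ncl_iter n.
Proof. by case: n => [|n] //=; apply: sub_ncl. Qed.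

Lemma ncl_iterS_sub n : ncl_iter n.+1 \subset ncl_iter n.
Proof. exact/ncl_sub/sub_ncl_iter. Qed.

Lemma ncl_iter_sub n : ncl_iter n \subset G.
Proof. by elim: n => [|n IHn] //; apply: subset_trans (ncl_iterS_sub n) IHn. Qed.

Lemma desc_chainP gs : desc_chain H G gs <-> gs = ncl_chain.
Proof.
split=> [[k [size_gs gs0 gsS gsk]] | ->]; last first.
  exists ncl_len; split=> [||i lt_ik|]; first exact: size_ncl_chain.
  - by rewrite nth_ncl_chain.
  - rewrite (nth_ncl_chain _ (lt_ik : i.+1 < ncl_len.+1)) (nth_ncl_chain _ (ltnW lt_ik)).
    by rewrite properEneq ncl_iterS_sub andbT ncl_len_min.
  - by rewrite nth_ncl_chain //; apply/eqP/ncl_len_stable.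
have nth_gs i : i <= k -> nth (G : {set gT}) gs i = ncl_iter i.
  by elim: i => [|i IHi] lt_ik //; have [-> _] := gsS i lt_ik; rewrite IHi 1?ltnW.
have len_k : ncl_len = k.
  apply: ncl_lenE => [i lt_ik|]; last by rewrite /ncl_stable /= -nth_gs // gsk.
  have [_] := gsS i lt_ik; rewrite (nth_gs i.+1 lt_ik) (nth_gs i (ltnW lt_ik)).
  by rewrite properEneq => /andP[].
apply: (@eq_from_nth _ (G : {set gT})); rewrite size_gs ?size_ncl_chain ?len_k //.
by move=> i lt_ik; rewrite nth_gs // nth_ncl_chain ?len_k.
Qed.

End NormalClosureChain.

Lemma dimv_tower (F0 : fieldType) (L0 : fieldExtType F0) (K F L : {subfield L0}) :
  (K <= F)%VS -> (F <= L)%VS -> (\dim_K F * \dim_F L = \dim_K L)%N.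
Proof.
move=> sKF sFL; apply/eqP; rewrite -(eqn_pmul2r (adim_gt0 K)) mulnAC.
by rewrite -dim_sup_field // mulnC -dim_sup_field // -dim_sup_field ?(subv_trans sKF sFL).
Qed.

Section FixedFieldCorrespondence.
Variables (F0 : fieldType) (Om : splittingFieldType F0) (M : {subfield Om}).
Implicit Types X Y : {group gal_of M}.

Lemma fixedField_inj X Y : fixedField X = fixedField Y -> X :=: Y.
Proof. by move=> eqXY; rewrite -(gal_fixedField X) eqXY gal_fixedField. Qed.

Lemma galois_fixedField_normal X Y : (Y \subset X)%g ->
  galois (fixedField X) (fixedField Y) = (Y <| X)%g.
Proof.
move=> sYX; have sXYM : (fixedField X <= fixedField Y <= M)%VS.
  by rewrite fixedFieldS // fixedField_bound.
apply/idP/idP => [/and3P[_ _ nXY] | nsYX].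
  by have := normalField_normal sXYM nXY; rewrite !gal_fixedField.
have := @normal_fixedField_galois _ _ M (fixedField_aspace X) (fixedField_galois X) Y.
by rewrite gal_fixedField; apply.
Qed.

End FixedFieldCorrespondence.

Section GaloisClosure.
Variables (F0 : fieldType) (Om : splittingFieldType F0) (K L M : {subfield Om}).
Hypotheses (sKL : (K <= L)%VS) (sLM : (L <= M)%VS) (galKM : galois K M).
Local Notation G := 'Gal(M / K)%g.
Local Notation H := 'Gal(M / L)%g.
Implicit Types F : {subfield Om}.

Let sHG : (H \subset G)%g := galS M sKL.

Lemma fixedField_galK : fixedField G = K.
Proof. exact/galois_fixedField. Qed.

Lemma fixedField_galL : fixedField H = L.
Proof. by apply/galois_fixedField; apply: galoisS galKM; rewrite sKL sLM. Qed.

Lemma subv_fixedField (X : {group gal_of M}) : (X \subset G)%g -> (K <= fixedField X)%VS.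
Proof. by rewrite -galois_connection // (subv_trans sKL sLM). Qed.

Lemma fixedField_subv (X : {group gal_of M}) : (H \subset X)%g -> (fixedField X <= L)%VS.
Proof. by move=> sHX; rewrite -fixedField_galL fixedFieldS. Qed.

Section IntermediateField.
Variable E : {subfield Om}.
Hypotheses (sKE : (K <= E)%VS) (sEL : (E <= L)%VS).
Local Notation GE := 'Gal(M / E)%g.

Let sEM : (E <= M)%VS := subv_trans sEL sLM.
Let galEM : galois E M := galoisS (introT andP (conj sKE sEM)) galKM.
Let sHGE : (H \subset GE)%g := galS M sEL.

Lemma fixedField_ncl_galois : galois E (fixedField (ncl H GE)).
Proof. exact/normal_fixedField_galois/ncl_normal. Qed.

Lemma galois_subv_fixedField_ncl F :
  (E <= F)%VS -> (F <= L)%VS -> galois E F -> (F <= fixedField (ncl H GE))%VS.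
Proof.
move=> sEF sFL /and3P[_ _ nEF]; have sFM := subv_trans sFL sLM.
have nsGF : ('Gal(M / F) <| GE)%g.
  by apply: (normalField_normal _ nEF); rewrite sEF sFM.
have galFM : galois F M by apply: galoisS galEM; rewrite sEF sFM.
have /fixedFieldS : (ncl H GE \subset 'Gal(M / F))%g by apply: ncl_min => //; apply: galS.
by rewrite (galois_fixedField galFM).
Qed.

Lemma maxgalP F : maxgal E L F <-> F = fixedField (ncl H GE) :> {vspace Om}.
Proof.
have sE_N : (E <= fixedField (ncl H GE))%VS by rewrite -galois_connection // ncl_sub.
have sN_L : (fixedField (ncl H GE) <= L)%VS by apply/fixedField_subv/sub_ncl.
split=> [[sEF sFL galEF maxF] | eqF]; last first.
  rewrite /maxgal eqF; split=> // [|F' sEF' sF'L galEF']; first exact: fixedField_ncl_galois.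
  by rewrite leq_div2r // dimvS // galois_subv_fixedField_ncl.
have := maxF (fixedField_aspace (ncl H GE)) sE_N sN_L fixedField_ncl_galois.
rewrite -(leq_pmul2r (adim_gt0 E)) -!dim_sup_field // => leNF.
by apply/eqP; rewrite eqEdim galois_subv_fixedField_ncl.
Qed.

Lemma dim_maxgal F : maxgal E L F -> \dim_E F = #|GE : ncl H GE|%g.
Proof. by move/maxgalP->; rewrite dim_fixed_galois ?ncl_sub. Qed.

Lemma dim_over_maxgal F : maxgal E L F -> \dim_F L = #|ncl H GE : H|%g.
Proof.
move/maxgalP->; rewrite -[X in \dim_(_) X]fixedField_galL.
rewrite -[in RHS](gal_fixedField (ncl_group H GE)).
by rewrite dim_fixed_galois ?fixedField_galois ?gal_fixedField ?sub_ncl.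
Qed.

Lemma tdegP n : tdeg E L n <-> n = #|GE : ncl H GE|%g.
Proof.
split=> [[F [/dim_maxgal <- <-]] // | ->].
by exists (fixedField_aspace (ncl H GE)); split; [apply/maxgalP | apply/dim_maxgal/maxgalP].
Qed.

Lemma udegP n : udeg E L n <-> n = #|ncl H GE : H|%g.
Proof.
split=> [[F [/dim_over_maxgal <- <-]] // | ->].
by exists (fixedField_aspace (ncl H GE)); split; [apply/maxgalP | apply/dim_over_maxgal/maxgalP].
Qed.

Section PrimitiveElement.
Variable a : Om.
Hypothesis defL : <<E; a>>%VS = L :> {vspace Om}.
Local Notation NE := 'N_GE(H)%G.

Let La : a \in L. Proof. by rewrite -defL memv_adjoin. Qed.
Let Ma : a \in M. Proof. exact: subvP sLM a La. Qed.

Lemma gal_primitiveE g : g \in GE -> (g \in H) = (g a == a).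
Proof.
move=> GEg; apply/idP/eqP => [Hg | ga]; first exact: fixed_gal sLM Hg La.
rewrite gal_kHom //; apply/kAHomP => y.
rewrite -defL => /Fadjoin_polyP[p Ep ->].
by rewrite -horner_map /= (fixedPoly_gal sEM GEg Ep) ga.
Qed.

Lemma gal_primitive_rcosetE g1 g2 : g1 \in GE -> g2 \in GE ->
  (g1 a == g2 a) = (H :* g1 == H :* g2)%g.
Proof.
move=> GEg1 GEg2; apply/eqP/eqP => [eq_g12 | /rcoset_eqP].
  apply/rcoset_eqP; rewrite mem_rcoset gal_primitiveE ?groupM ?groupV //.
  by rewrite galM // eq_g12 -galM // mulgV gal_id.
rewrite mem_rcoset gal_primitiveE ?groupM ?groupV // galM // => /eqP eq_a.
by rewrite -[in RHS]eq_a -galM ?memv_gal // mulVg gal_id.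
Qed.

Lemma mem_conjugates_in_field x :
  (x \in L) && root (minPoly E a) x = (x \in [seq (g : gal_of M) a | g <- enum NE]).
Proof.
apply/andP/mapP => [[Lx rx] | [g]]; last first.
  rewrite mem_enum => /setIP[GEg NHg] ->; split; last exact: root_minPoly_gal.
  rewrite -fixedField_galL; apply/fixedFieldP; first exact: memv_gal.
  move=> h Hh; have Hhg : (h ^ g^-1)%g \in H by rewrite memJ_norm ?groupV.
  by rewrite -galM // conjgCV galM ?(fixed_gal sLM Hhg La).
have nEM : normalField E M by case/and3P: galEM.
have [g GEg xE] := normalField_root_minPoly sEM nEM Ma rx.
exists g => //; rewrite mem_enum inE GEg /=.
have sHHg : (H \subset H :^ g)%g.
  apply/subsetP => h Hh; have GEh := subsetP sHGE h Hh.
  rewrite mem_conjg gal_primitiveE ?groupJ ?groupV // conjgE invgK.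
  by rewrite !galM ?memv_gal // xE (fixed_gal sLM Hh Lx) -xE -galM // mulgV gal_id.
by apply/normP/esym/eqP; rewrite eqEcard sHHg cardJg leqnn.
Qed.

Lemma size_conjugates_in_field :
  size (undup [seq (g : gal_of M) a | g <- enum NE]) = #|NE : H|%g.
Proof.
rewrite (@eq_size_undup_map _ _ _ _ (fun g => H :* g)%g); last first.
  move=> g1 g2; rewrite !mem_enum => /setIP[GEg1 _] /setIP[GEg2 _].
  exact: gal_primitive_rcosetE.
rewrite /indexg -(card_uniqP (undup_uniq _)); apply: eq_card => C.
rewrite mem_undup; apply/mapP/imsetP => -[g NEg ->];
  by exists g; rewrite ?mem_enum in NEg *; rewrite ?rcosetE.
Qed.

End PrimitiveElement.

Lemma cluster_index r : cluster E L r -> r = #|'N_GE(H) : H|%g.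
Proof.
case=> a [defL [s [uniq_s mem_s <-]]]; rewrite -(size_conjugates_in_field defL).
apply: perm_size; apply: uniq_perm; rewrite ?undup_uniq // => x.
by rewrite mem_undup mem_s mem_conjugates_in_field.
Qed.

End IntermediateField.

Section FixedFieldOfSubgroup.
Variable X : {group gal_of M}.
Hypotheses (sHX : (H \subset X)%g) (sXG : (X \subset G)%g).
Let sKX := subv_fixedField sXG.
Let sXL := fixedField_subv sHX.

Lemma maxgal_fixedFieldP F :
  maxgal (fixedField_aspace X) L F <-> F = fixedField (ncl H X) :> {vspace Om}.
Proof. by have := maxgalP sKX sXL F; rewrite /= gal_fixedField. Qed.

Lemma tdeg_fixedFieldP n : tdeg (fixedField_aspace X) L n <-> n = #|X : ncl H X|%g.
Proof. by have := tdegP sKX sXL n; rewrite /= gal_fixedField. Qed.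

Lemma udeg_fixedFieldP n : udeg (fixedField_aspace X) L n <-> n = #|ncl H X : H|%g.
Proof. by have := udegP sKX sXL n; rewrite /= gal_fixedField. Qed.

End FixedFieldOfSubgroup.

Lemma cluster_dvdn F rK rF : maxgal K L F -> cluster K L rK -> cluster F L rF ->
  (rK %| \dim_K F * rF)%N.
Proof.
move=> maxF /(cluster_index (subvv K) sKL)->; have [sKF sFL _ _] := maxF.
move=> /(cluster_index sKF sFL)->; rewrite (dim_maxgal (subvv K) sKL maxF).
rewrite ((maxgalP (subvv K) sKL F).1 maxF) gal_fixedField.
exact: index_norm_dvdn (sub_ncl _ _) (ncl_normal sHG).
Qed.

Definition galois_chain : seq {subfield Om} :=
  [seq fixedField_aspace A | A <- ncl_chain H G].

Local Notation len := (ncl_len H G).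
Local Notation Gi := (ncl_iter H G).

Lemma size_galois_chain : size galois_chain = len.+1.
Proof. by rewrite size_map size_ncl_chain. Qed.

Lemma nth_galois_chain i : i <= len -> nth K galois_chain i = fixedField_aspace (Gi i).
Proof.
by move=> le_i; rewrite (nth_map (G : {set gal_of M})) ?size_ncl_chain // nth_ncl_chain.
Qed.

Lemma galois_chainE n :
  len = n -> galois_chain = mkseq (fun i => fixedField_aspace (Gi i)) n.+1.
Proof. by rewrite /galois_chain /ncl_chain => ->; rewrite -map_comp. Qed.

Lemma fixedField_aspace_galK : fixedField_aspace G = K.
Proof. exact/val_inj/fixedField_galK. Qed.

Lemma fixedField_aspace_eqL (X : {group gal_of M}) : fixedField_aspace X = L <-> X :=: H.
Proof.
split=> [/(congr1 val) /= eqXL | ->]; last exact/val_inj/fixedField_galL.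
by apply: fixedField_inj; rewrite eqXL fixedField_galL.
Qed.

Lemma asc_chainP s : asc_chain K L s <-> s = galois_chain.
Proof.
split=> [[k [size_s s0 sS sk]] | ->]; last first.
  exists len; split=> [||i lt_i|]; first exact: size_galois_chain.
  - by rewrite nth_galois_chain ?fixedField_aspace_galK.
  - rewrite !nth_galois_chain ?(ltnW lt_i) //; split.
      apply: contra (ncl_len_min lt_i) => /eqP/(congr1 val)/fixedField_inj eqGi.
      by rewrite /ncl_stable eqGi.
    exact/(maxgal_fixedFieldP (sub_ncl_iter sHG i) (ncl_iter_sub sHG i)).
  - rewrite nth_galois_chain //.
    apply/(tdeg_fixedFieldP (sub_ncl_iter sHG _) (ncl_iter_sub sHG _)).
    by rewrite (eqP (ncl_len_stable H G)) indexgg.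
have nth_s i : i <= k -> nth K s i = fixedField_aspace (Gi i).
  elim: i => [|i IHi] lt_ik; first by rewrite s0 fixedField_aspace_galK.
  have [_] := sS i lt_ik; rewrite IHi 1?ltnW //.
  by move/(maxgal_fixedFieldP (sub_ncl_iter sHG i) (ncl_iter_sub sHG i)); apply: val_inj.
have len_k : len = k.
  apply: ncl_lenE => [i lt_ik|]; last first.
    move: sk; rewrite nth_s // => /(tdeg_fixedFieldP (sub_ncl_iter sHG k) (ncl_iter_sub sHG k)).
    move/esym/eqP; rewrite indexg_eq1 => sGN.
    by rewrite /ncl_stable eqEsubset sGN ncl_iterS_sub.
  have [neq_s _] := sS i lt_ik; apply/negP => /eqP eqGi; case/negP: neq_s.
  by rewrite (nth_s i (ltnW lt_ik)) (nth_s i.+1 lt_ik) eqGi.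
apply: (@eq_from_nth _ K); rewrite size_s ?size_galois_chain ?len_k //.
by move=> i lt_ik; rewrite nth_s // nth_galois_chain ?len_k.
Qed.

Lemma galois_chain_lastP : last K galois_chain = L <-> Gi len :=: H.
Proof.
by rewrite -nth_last size_galois_chain nth_galois_chain //; apply: fixedField_aspace_eqL.
Qed.

Lemma galois_chain_last_galois : 1 < size galois_chain ->
  (last K galois_chain = L <-> galois (nth K galois_chain (size galois_chain).-2) L).
Proof.
rewrite size_galois_chain; case def_len: len => [|j] // _.
apply: iff_trans galois_chain_lastP _.
rewrite nth_galois_chain ?def_len // -[X in galois _ X]fixedField_galL.
by rewrite galois_fixedField_normal ?sub_ncl_iter //; exact: rwP (ncl_idP (sub_ncl_iter sHG j)).
Qed.

Lemma tdeg1P : tdeg K L 1 <-> ncl H G = G.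
Proof.
rewrite -[X in tdeg X]fixedField_aspace_galK.
split=> [/tdeg_fixedFieldP | eqG]; last by apply/tdeg_fixedFieldP; rewrite ?eqG ?indexgg.
move=> /(_ sHG (subxx _)) /esym/eqP; rewrite indexg_eq1 => sGN.
by apply/eqP; rewrite eqEsubset sGN ncl_sub.
Qed.

Lemma galois_chain_trivialP : ncl H G = G <-> galois_chain = [:: K].
Proof.
split=> [eqG | /(congr1 size)]; last first.
  by rewrite size_galois_chain => -[len0]; have /eqP := ncl_len_stable H G; rewrite len0.
have len0 : len = 0 by apply: ncl_lenE => //; apply/eqP.
by rewrite (galois_chainE len0); congr [:: _]; apply: fixedField_aspace_galK.
Qed.

Lemma galois_normalE : galois K L = (H <| G)%g.
Proof. by have := galois_fixedField_normal sHG; rewrite fixedField_galK fixedField_galL. Qed.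

Section Minimality.
Hypothesis minM : forall M' : {subfield Om}, (L <= M')%VS -> galois K M' -> (M <= M')%VS.

Lemma galois_gal_trivial : galois K L -> H = 1%g.
Proof.
move=> galKL; have sML := minM (subvv L) galKL.
apply/trivgP/subsetP => h Hh; rewrite inE; apply/gal_eqP => x Mx.
by rewrite gal_id (fixed_gal sLM Hh) // (subvP sML).
Qed.

Lemma galois_ncl1P : galois K L <-> ncl H G = 1%g.
Proof.
split=> [galKL | ncl1]; first by rewrite galois_gal_trivial // ncl_id ?normal1.
have H1 : H = 1%g by apply/trivgP; rewrite -ncl1 sub_ncl.
by rewrite galois_normalE H1 normal1.
Qed.

Lemma ncl1_idP : ncl H G = 1%g <-> ncl H G = H.
Proof.
split=> [ncl1 | /(ncl_idP sHG)]; last by rewrite -galois_normalE => /galois_ncl1P.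
by rewrite ncl1; apply/esym/trivgP; rewrite -ncl1 sub_ncl.
Qed.

End Minimality.

Lemma galois_chain_pairP : K != L -> (ncl H G = H <-> galois_chain = [:: K; L]).
Proof.
move=> neKL; split=> [eqH | eq_chain]; last first.
  have /(congr1 size) := eq_chain; rewrite size_galois_chain => -[len1].
  by have := galois_chain_lastP.1 (congr1 (last K) eq_chain); rewrite len1.
have len1 : len = 1.
  apply: ncl_lenE => [i |]; last by apply: ncl_stable_eqH; apply: eqH.
  rewrite ltnS leqn0 => /eqP ->; rewrite /ncl_stable /= eqH.
  apply: contra neKL => /eqP eqHG; apply/eqP/val_inj.
  by rewrite /= -fixedField_galK -eqHG fixedField_galL.
rewrite (galois_chainE len1); congr [:: _; _]; first exact: fixedField_aspace_galK.
exact/fixedField_aspace_eqL.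
Qed.

Lemma galois_chain_tripleP :
  [&& ncl H G != G, ncl H G != H & (H <| ncl H G)%g] <->
  exists F : {subfield Om},
    F = fixedField (ncl H G) :> {vspace Om} /\ galois_chain = [:: K; F; L].
Proof.
split=> [/and3P[neG neH nsH] | [F [_ eq_chain]]]; last first.
  have /(congr1 size) := eq_chain; rewrite size_galois_chain => -[len2].
  have := galois_chain_lastP.1 (congr1 (last K) eq_chain); rewrite len2 /= => eqH.
  have nsH : (H <| ncl H G)%g by apply/(ncl_idP (sub_ncl _ _)).
  have unst i : i < 2 -> ~~ ncl_stable H G i by rewrite -len2; apply: ncl_len_min.
  have := unst 0 isT; have := unst 1 isT.
  by rewrite /ncl_stable /= eqH nsH eq_sym andbT => -> ->.
have len2 : len = 2.
  apply: ncl_lenE => [[|[|i]] // |]; last by apply: ncl_stable_eqH; apply: ncl_id.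
  by rewrite /ncl_stable /= (ncl_id nsH) eq_sym.
exists (fixedField_aspace (ncl H G)); split=> //.
rewrite (galois_chainE len2); congr [:: _; _; _]; first exact: fixedField_aspace_galK.
exact/fixedField_aspace_eqL/ncl_id.
Qed.

End GaloisClosure.

Theorem theorem7p5 (F0 : fieldType) (Om : splittingFieldType F0)
    (K L M : {subfield Om}) :
  (K <= L)%VS -> K != L -> is_gal_closure K L M ->
  let G := 'Gal(M / K)%g in
  let H := 'Gal(M / L)%g in
  let HG := ncl H G in
  (* (1) *)
  (forall F : {subfield Om}, maxgal K L F <-> (F = fixedField HG :> {vspace Om}))
  (* (2) *)
  /\ (forall (F : {subfield Om}) (t u : nat), maxgal K L F ->
        t = \dim_K F -> u = \dim_F L ->
        [/\ t * u = \dim_K L, t = #|G : HG|%g, u = #|HG : H|%g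
          & forall rK rF, cluster K L rK -> cluster F L rF -> rK %| t * rF])
  (* (3) *)
  /\ ((exists! s, asc_chain K L s) /\ (exists! gs, desc_chain H G gs)
      /\ forall s gs, asc_chain K L s -> desc_chain H G gs ->
         [/\ size s = size gs,
             forall i, i < size s -> (nth K s i = fixedField (nth G gs i) :> {vspace Om}),
             forall i, i < size s -> tdeg (nth K s i) L #|nth G gs i : ncl H (nth G gs i)|%g
           & forall i, i < size s -> udeg (nth K s i) L #|ncl H (nth G gs i) : H|%g])
  (* (4)-(7) *)
  /\ (forall s, asc_chain K L s ->
      [/\ (* (4) *)
          (1 < size s -> (last K s = L <-> galois (nth K s (size s).-2) L)),
          (* (5) *)
          (tdeg K L 1 <-> HG = G) /\ (HG = G <-> s = [:: K]),
          (* (6) *)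
          (galois K L <-> HG = 1%g) /\ (HG = 1%g <-> HG = H) /\ (HG = H <-> s = [:: K; L])
        & (* (7) *)
          ((H \proper HG)%g && (H <| HG)%g <-> [&& HG != G, HG != H & (H <| HG)%g])
          /\ ([&& HG != G, HG != H & (H <| HG)%g] <->
              exists F : {subfield Om}, (F = fixedField HG :> {vspace Om}) /\ s = [:: K; F; L])]).
Proof.
move=> sKL neKL [sLM galKM minM]; cbv zeta.
have sKK := subvv K; have sHG := galS M sKL.
have ascP := asc_chainP sKL sLM galKM; have descP := desc_chainP sHG.
split; first exact: (maxgalP sKL sLM galKM sKK sKL).
split.
  move=> F t u maxF -> ->; have [sKF sFL _ _] := maxF.
  split; first exact: dimv_tower.
  - exact: (dim_maxgal sKL sLM galKM sKK sKL maxF).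
  - exact: (dim_over_maxgal sKL sLM galKM sKK sKL maxF).
  - by move=> rK rF; apply: (cluster_dvdn sKL sLM galKM maxF).
split.
  split; [|split].
  - by exists (galois_chain K L M); split=> [|s /ascP ->]; first exact/ascP.
  - by exists (ncl_chain 'Gal(M / L) 'Gal(M / K)); split=> [|gs /descP ->]; first exact/descP.
  move=> s gs /ascP-> /descP->; rewrite size_galois_chain.
  split=> [|i lt_i|i lt_i|i lt_i]; rewrite ?size_ncl_chain ?nth_galois_chain ?nth_ncl_chain //.
  - exact/(tdeg_fixedFieldP sKL sLM galKM (sub_ncl_iter sHG i) (ncl_iter_sub sHG i)).
  - exact/(udeg_fixedFieldP sKL sLM galKM (sub_ncl_iter sHG i) (ncl_iter_sub sHG i)).
move=> s /ascP->; split.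
- exact: (galois_chain_last_galois sKL sLM galKM).
- split; [exact: (tdeg1P sKL sLM galKM) | exact: (galois_chain_trivialP L galKM)].
- split; first exact: (galois_ncl1P sKL sLM galKM minM).
  split; [exact: (ncl1_idP sKL sLM galKM minM) | exact: (galois_chain_pairP sKL sLM galKM)].
- by split; [rewrite proper_normal_ncl | apply: (galois_chain_tripleP sKL sLM galKM)].
Qed.
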